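(* Let $0<\epsilon<1/2$, let $C=1-h(\epsilon)$ with $h(\epsilon)=-\epsilon\log_2\epsilon-(1-\epsilon)\log_2(1-\epsilon)$, let $0<R<C$ and $0<\rho<1$ be fixed, and set $k=k(n)=\lfloor Rn\rfloor$. If $\mathbf{A}$ is a random $n\times k$ binary matrix with the Bernoulli$(n,k,\rho)$ distribution, then \[ \lim_{n\to\infty}\mathbb{E}_{\mathbf{A}}\big(p_c(\mathbf{A})\big)=1 . \]
   Context: All arithmetic on binary vectors and matrices is in $\mathrm{GF}(2)$. A binary linear code with generating matrix $\mathbf{A}\in\{0,1\}^{n\times k}$ encodes a message $X\in\{0,1\}^k$ as $\mathbf{A}X\in\{0,1\}^n$. Over the binary symmetric channel (BSC) with cross-over probability $\epsilon$, the channel output is $Y=\mathbf{A}X+N$, where $X$ is uniformly distributed on $\{0,1\}^k$ and $N\in\{0,1\}^n$ has i.i.d. Bernoulli$(\epsilon)$ entries, independent of $X$. The decoder, on receiving $Y=y$, outputs a random estimate $\hat X$ drawn from the posterior distribution $\mathbb{P}(X=\cdot\mid Y=y)$. Its probability of correct detection is $p_c(\mathbf{A})=\mathbb{E}_{X,Y}\big[\mathbb{P}(X\mid Y)\big]$, and $p_e(\mathbf{A})=1-p_c(\mathbf{A})$. The Bernoulli$(n,k,\rho)$ distribution on the set $\mathcal{A}_{n\times k}$ of binary $n\times k$ matrices is the one in which all entries are i.i.d. Bernoulli$(\rho)$. *)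

From Stdlib Require Import Reals.
From mathcomp Require Import all_boot.
Set Implicit Arguments. Unset Strict Implicit. Unset Printing Implicit Defensive.

Local Open Scope R_scope.

Definition bvec (n : nat) := {ffun 'I_n -> bool}.
Definition bmat (n k : nat) := {ffun 'I_n * 'I_k -> bool}.

Definition Rsum (T : finType) (f : T -> R) : R := \big[Rplus/0]_(t : T) f t.
Definition Rprod (T : finType) (f : T -> R) : R := \big[Rmult/1]_(t : T) f t.

Definition encode (n k : nat) (A : bmat n k) (x : bvec k) : bvec n :=
  [ffun i => \big[addb/false]_(j : 'I_k) (A (i, j) && x j)].
Definition vadd (n : nat) (u v : bvec n) : bvec n := [ffun i => addb (u i) (v i)].

Definition bern (p : R) (b : bool) : R := if b then p else 1 - p.

Definition noise_prob (eps : R) (n : nat) (e : bvec n) : R :=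
  Rprod (fun i : 'I_n => bern eps (e i)).

(* joint law P(X = x, Y = y) with X uniform on {0,1}^k, Y = A X + N *)
Definition joint (eps : R) (n k : nat) (A : bmat n k) (x : bvec k) (y : bvec n) : R :=
  / (2 ^ k) * noise_prob eps (vadd y (encode A x)).

Definition out_prob (eps : R) (n k : nat) (A : bmat n k) (y : bvec n) : R :=
  Rsum (fun x : bvec k => joint eps A x y).

Definition posterior (eps : R) (n k : nat) (A : bmat n k) (x : bvec k) (y : bvec n) : R :=
  joint eps A x y / out_prob eps A y.

Definition p_c (eps : R) (n k : nat) (A : bmat n k) : R :=
  Rsum (fun x : bvec k => Rsum (fun y : bvec n =>
    joint eps A x y * posterior eps A x y)).

Definition mat_prob (rho : R) (n k : nat) (A : bmat n k) : R :=
  Rprod (fun ij : 'I_n * 'I_k => bern rho (A ij)).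

Definition avg_pc (eps rho : R) (n k : nat) : R :=
  Rsum (fun A : bmat n k => mat_prob rho A * p_c eps A).

Definition log2 (x : R) : R := ln x / ln 2.
Definition h2 (eps : R) : R := - eps * log2 eps - (1 - eps) * log2 (1 - eps).
Definition capacity (eps : R) : R := 1 - h2 eps.

Definition kfloor (Rt : R) (n : nat) : nat := Z.to_nat (Int_part (Rt * INR n)).

(* Given the output y, the posterior-sampling decoder is correct with
   probability sum_x pi(x|y)^2, and 1 - sum_x pi^2 <= 2 sum_x pi B(x, y) for
   any test B that is < 1 for at most one x.  We take for B an exponential
   (Chernoff) majorant of a typicality test at threshold tau n: x fails if the
   noise y + A x is heavy, or if some other x' explains y with light noise.
   Averaged over the noise and the Bernoulli(rho) matrix, the coordinates of
   e + A d are i.i.d. Bernoulli((1 - (1 - 2 eps)(1 - 2 rho)^wt(d)) / 2), so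
   each term of the bound is an explicit power of a Bernoulli moment
   generating function.  Pick eps < tau < (1 - (1 - 2 eps)|1 - 2 rho|) / 2
   with R < 1 - h(tau).  For the 2^(Rn) differences d of weight >= W the
   parameter is almost 1/2, and their total is about 2^(n (R - 1 + h(tau)));
   the polynomially many of smaller weight are absorbed by weighting them
   with Z^(W - wt d).  Hence 1 - E p_c(A) decays exponentially. *)

From Stdlib Require Import Reals Lra Classical ZArith.
From HB Require Import structures.
From mathcomp Require Import all_boot.
Set Implicit Arguments. Unset Strict Implicit. Unset Printing Implicit Defensive.
Local Open Scope R_scope.

(** * Finite sums of reals over binary vectors *)

HB.instance Definition _ := Monoid.isComLaw.Build R 0 Rplus
  (fun x y z => esym (Rplus_assoc x y z)) Rplus_comm Rplus_0_l.
HB.instance Definition _ := Monoid.isComLaw.Build R 1 Rmult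
  (fun x y z => esym (Rmult_assoc x y z)) Rmult_comm Rmult_1_l.
HB.instance Definition _ := Monoid.isMulLaw.Build R 0 Rmult Rmult_0_l Rmult_0_r.
HB.instance Definition _ :=
  Monoid.isAddLaw.Build R Rmult Rplus Rmult_plus_distr_r Rmult_plus_distr_l.

Section RealBigops.
Variable T : finType.
Implicit Types f g : T -> R.

Lemma Rsum_ext f g : (forall t, f t = g t) -> Rsum f = Rsum g.
Proof. by move=> fg; apply: eq_bigr. Qed.

Lemma Rsum_le f g : (forall t, f t <= g t) -> Rsum f <= Rsum g.
Proof. by move=> fg; rewrite /Rsum; elim/big_ind2: _ => // *; lra. Qed.

Lemma Rsum_ge0 f : (forall t, 0 <= f t) -> 0 <= Rsum f.
Proof. by move=> f0; rewrite /Rsum; elim/big_ind: _ => // *; lra. Qed.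

Lemma Rsum_plus f g : Rsum (fun t => f t + g t) = Rsum f + Rsum g.
Proof. exact: big_split. Qed.

Lemma Rsum_scal a f : Rsum (fun t => a * f t) = a * Rsum f.
Proof. by rewrite /Rsum big_distrr. Qed.

Lemma Rsum_minus f g : Rsum (fun t => f t - g t) = Rsum f - Rsum g.
Proof.
rewrite /Rminus -(Rmult_1_l (Rsum g)) Ropp_mult_distr_l -Rsum_scal -Rsum_plus.
by apply: Rsum_ext => t; ring.
Qed.

Lemma Rsum_const c : Rsum (fun _ : T => c) = INR #|T| * c.
Proof.
rewrite /Rsum big_const; elim: #|T| => [|m IH]; first by rewrite Rmult_0_l.
by rewrite iterS IH S_INR; ring.
Qed.

Lemma Rsum_bigD1 t0 f :
  Rsum f = f t0 + Rsum (fun t => if t == t0 then 0 else f t).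
Proof.
rewrite /Rsum (bigD1 t0) //= [in RHS](bigD1 t0) //= eqxx Rplus_0_l.
by congr (_ + _); apply: eq_bigr => t /negbTE ->.
Qed.

Lemma Rsum_ge_term t0 f : (forall t, 0 <= f t) -> f t0 <= Rsum f.
Proof.
move=> f0; rewrite (Rsum_bigD1 t0).
suff: 0 <= Rsum (fun t => if t == t0 then 0 else f t) by lra.
by apply: Rsum_ge0 => t; case: eqP => _; [lra | apply: f0].
Qed.

Lemma Rprod_gt0 f : (forall t, 0 < f t) -> 0 < Rprod f.
Proof. by move=> f0; rewrite /Rprod; elim/big_ind: _ => // *; [lra | nra]. Qed.

Lemma Rprod_mult f g : Rprod (fun t => f t * g t) = Rprod f * Rprod g.
Proof. exact: big_split. Qed.

End RealBigops.

Lemma Rsum_exchange (T U : finType) (f : T -> U -> R) :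
  Rsum (fun t => Rsum (f t)) = Rsum (fun u => Rsum (fun t => f t u)).
Proof. exact: exchange_big. Qed.

Lemma Rprod_const n c : Rprod (fun _ : 'I_n => c) = c ^ n.
Proof. by rewrite /Rprod big_const card_ord; elim: n => //= n ->. Qed.

Lemma Rsum_ffun_Rprod (I J : finType) (f : I -> J -> R) :
  Rsum (fun v : {ffun I -> J} => Rprod (fun i => f i (v i)))
  = Rprod (fun i => Rsum (f i)).
Proof. by rewrite /Rsum /Rprod bigA_distr_bigA. Qed.

Lemma Rsum_bool_ffun_Rprod n (f : bool -> R) :
  Rsum (fun v : bvec n => Rprod (fun i => f (v i))) = (f true + f false) ^ n.
Proof.
rewrite (Rsum_ffun_Rprod (fun _ => f)) -Rprod_const.
by apply: eq_bigr => i _; rewrite /Rsum big_bool.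
Qed.

Lemma bern_sum p : bern p true + bern p false = 1.
Proof. rewrite /=; ring. Qed.

Lemma bern_gt0 p b : 0 < p < 1 -> 0 < bern p b.
Proof. by case: b => /=; lra. Qed.

Lemma Rsum_bern_prod n p : Rsum (fun v : bvec n => Rprod (fun i => bern p (v i))) = 1.
Proof. by rewrite Rsum_bool_ffun_Rprod bern_sum pow1. Qed.

Lemma card_bvec k : #|{: bvec k}| = (2 ^ k)%N.
Proof. by rewrite card_ffun card_bool card_ord. Qed.

Lemma INR_expn2 k : INR (2 ^ k)%N = 2 ^ k.
Proof. by elim: k => [|k IH] //; rewrite expnS mult_INR IH. Qed.

Lemma Rsum_bvec_const k c : Rsum (fun _ : bvec k => c) = 2 ^ k * c.
Proof. by rewrite Rsum_const card_bvec INR_expn2. Qed.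

Definition wt n (v : bvec n) : nat := #|[pred i | v i]|.

Lemma Rprod_if_wt n (v : bvec n) a :
  Rprod (fun i => if v i then a else 1) = a ^ wt v.
Proof. by rewrite /Rprod -big_mkcond /= big_const /wt; elim: #|_| => //= m ->. Qed.

Lemma exp_INR_mul (a : R) (w : nat) : exp (INR w * a) = exp a ^ w.
Proof.
elim: w => [|w IH]; first by rewrite Rmult_0_l exp_0.
by rewrite S_INR /= -IH -exp_plus; f_equal; ring.
Qed.

Lemma exp_wt n (v : bvec n) t :
  exp (t * INR (wt v)) = Rprod (fun i => if v i then exp t else 1).
Proof. by rewrite Rprod_if_wt Rmult_comm exp_INR_mul. Qed.

Lemma wt_eq0 k (d : bvec k) : wt d = 0%N -> d = [ffun=> false].
Proof. by move/card0_eq => d0; apply/ffunP => j; have := d0 j; rewrite !inE ffunE => ->. Qed.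

Lemma vaddK n (u v : bvec n) : vadd (vadd u v) v = u.
Proof. by apply/ffunP => i; rewrite !ffunE addbK. Qed.

Lemma Rsum_vadd n (c : bvec n) (f : bvec n -> R) :
  Rsum (fun v => f (vadd v c)) = Rsum f.
Proof.
rewrite /Rsum [RHS](reindex (fun v => vadd v c)) //.
by exists (fun v => vadd v c) => v _; apply: vaddK.
Qed.

Lemma encode_vadd n k (A : bmat n k) x x' :
  encode A (vadd x x') = vadd (encode A x) (encode A x').
Proof.
apply/ffunP => i; rewrite !ffunE -big_split /=.
by apply: eq_bigr => j _; rewrite ffunE andb_addr.
Qed.

(** * The posterior-sampling decoder *)

Lemma one_sub_sum_sqr_le (T : finType) (pi B : T -> R) :
  (forall x, 0 <= pi x) -> Rsum pi = 1 -> (forall x, 0 <= B x) ->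
  (forall x1 x2, x1 <> x2 -> 1 <= B x1 \/ 1 <= B x2) ->
  1 - Rsum (fun x => pi x ^ 2) <= 2 * Rsum (fun x => pi x * B x).
Proof.
move=> pi0 pi1 B0 Bpair.
have sq0 : 0 <= Rsum (fun x => pi x ^ 2) by apply: Rsum_ge0 => x; nra.
(* At most one [x0] has [B x0 < 1]; then [1 - pi x0 ^ 2 <= 2 (1 - pi x0)]
   and [B >= 1] elsewhere. *)
have [[x0 Bx0]|] := classic (exists x0, B x0 < 1); last first.
  move=> noB; suff: Rsum pi <= Rsum (fun x => pi x * B x) by lra.
  apply: Rsum_le => x; have := pi0 x; suff: 1 <= B x by nra.
  by apply: Rnot_lt_le => Bx; apply: noB; exists x.
have B1 x : x <> x0 -> 1 <= B x.
  by move=> xx0; case: (Bpair x0 x) => //; [move=> e; apply: xx0 | lra].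
have pix0 : pi x0 <= 1 by rewrite -pi1; apply: Rsum_ge_term.
have sqx0 : pi x0 ^ 2 <= Rsum (fun x => pi x ^ 2).
  by apply: (Rsum_ge_term x0 (f := fun x => pi x ^ 2)) => x; nra.
have rest : Rsum (fun x => if x == x0 then 0 else pi x)
    <= Rsum (fun x => if x == x0 then 0 else pi x * B x).
  apply: Rsum_le => x; case: eqP => [_ | /B1 Bx]; first lra.
  by have := pi0 x; nra.
have := Rsum_bigD1 x0 pi; have := Rsum_bigD1 x0 (fun x => pi x * B x).
have := pi0 x0; have := B0 x0; nra.
Qed.

Section Channel.
Variables (eps : R) (n k : nat).
Hypothesis eps01 : 0 < eps < 1.

Lemma noise_prob_gt0 (e : bvec n) : 0 < noise_prob eps e.
Proof. by apply: Rprod_gt0 => i; apply: bern_gt0. Qed.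

Variable A : bmat n k.

Lemma joint_gt0 x y : 0 < joint eps A x y.
Proof.
apply: Rmult_lt_0_compat; last exact: noise_prob_gt0.
by apply/Rinv_0_lt_compat/pow_lt; lra.
Qed.

Lemma out_prob_gt0 y : 0 < out_prob eps A y.
Proof.
apply: Rlt_le_trans (joint_gt0 [ffun=> false] y) _.
by apply: (Rsum_ge_term _ (f := joint eps A ^~ y)) => x; apply/Rlt_le/joint_gt0.
Qed.

Lemma Rsum_joint_prior x : Rsum (joint eps A x) = / 2 ^ k.
Proof.
by rewrite Rsum_scal (Rsum_vadd (encode A x) (@noise_prob eps n)) Rsum_bern_prod Rmult_1_r.
Qed.

Lemma Rsum_out_prob : Rsum (out_prob eps A) = 1.
Proof.
rewrite -Rsum_exchange (Rsum_ext Rsum_joint_prior) Rsum_bvec_const.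
by field; apply: pow_nonzero; lra.
Qed.

Lemma posterior_ge0 x y : 0 <= posterior eps A x y.
Proof.
apply: Rmult_le_pos; first exact/Rlt_le/joint_gt0.
exact/Rlt_le/Rinv_0_lt_compat/out_prob_gt0.
Qed.

Lemma Rsum_posterior y : Rsum (posterior eps A ^~ y) = 1.
Proof.
rewrite /posterior /Rdiv (Rsum_ext (fun x => Rmult_comm _ _)) Rsum_scal.
by rewrite Rinv_l //; apply: Rgt_not_eq; apply: out_prob_gt0.
Qed.

Lemma p_cE :
  p_c eps A = Rsum (fun y => out_prob eps A y * Rsum (fun x => posterior eps A x y ^ 2)).
Proof.
rewrite /p_c Rsum_exchange; apply: Rsum_ext => y; rewrite -Rsum_scal.
apply: Rsum_ext => x; rewrite /posterior; field.
by apply: Rgt_not_eq; apply: out_prob_gt0.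
Qed.

Lemma p_c_le1 : p_c eps A <= 1.
Proof.
rewrite p_cE -Rsum_out_prob; apply: Rsum_le => y.
have o0 := out_prob_gt0 y.
suff: Rsum (fun x => posterior eps A x y ^ 2) <= 1 by nra.
rewrite -(Rsum_posterior y); apply: Rsum_le => x.
have p1 : posterior eps A x y <= 1.
  rewrite -(Rsum_posterior y).
  by apply: (Rsum_ge_term x (f := posterior eps A ^~ y)) => x'; apply: posterior_ge0.
by have := posterior_ge0 x y; nra.
Qed.

Lemma p_c_error_le (B : bvec k -> bvec n -> R) :
  (forall x y, 0 <= B x y) ->
  (forall y x1 x2, x1 <> x2 -> 1 <= B x1 y \/ 1 <= B x2 y) ->
  1 - p_c eps A <= 2 * Rsum (fun x => Rsum (fun y => joint eps A x y * B x y)).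
Proof.
move=> B0 Bpair; rewrite p_cE -{1}Rsum_out_prob -Rsum_minus Rsum_exchange -Rsum_scal.
apply: Rsum_le => y; have o0 := out_prob_gt0 y.
have := one_sub_sum_sqr_le (posterior_ge0 ^~ y) (Rsum_posterior y) (B0 ^~ y) (Bpair y).
have -> : Rsum (fun x => joint eps A x y * B x y)
        = out_prob eps A y * Rsum (fun x => posterior eps A x y * B x y).
  rewrite -Rsum_scal; apply: Rsum_ext => x; rewrite /posterior; field; lra.
nra.
Qed.

End Channel.

(** * A typicality test *)

Definition upper_test n (lam T : R) (v : bvec n) : R := exp (lam * (INR (wt v) - T)).
Definition lower_test n (mu T : R) (v : bvec n) : R := exp (mu * (T - INR (wt v))).

Lemma exp_lt1 x : exp x < 1 -> x < 0.
Proof. by rewrite -exp_0 => /exp_lt_inv. Qed.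

Lemma upper_test_lt1 n lam T (v : bvec n) :
  0 < lam -> upper_test lam T v < 1 -> INR (wt v) < T.
Proof. by move=> lam0 /exp_lt1; nra. Qed.

Lemma lower_test_lt1 n mu T (v : bvec n) :
  0 < mu -> lower_test mu T v < 1 -> T < INR (wt v).
Proof. by move=> mu0 /exp_lt1; nra. Qed.

Lemma vadd_eq n (d x : bvec n) : (vadd d x == x) = (d == [ffun=> false]).
Proof.
apply/eqP/eqP => [dx | ->]; apply/ffunP => i; last by rewrite !ffunE.
by have := congr1 (fun v : bvec n => v i) dx; rewrite !ffunE; case: (d i); case: (x i).
Qed.

Lemma vadd_cancel n (x d : bvec n) : vadd x (vadd d x) = d.
Proof. by apply/ffunP => i; rewrite !ffunE addbC addbK. Qed.

Lemma vadd_encode_shift n k (A : bmat n k) e x d :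
  vadd (vadd e (encode A x)) (encode A (vadd d x)) = vadd e (encode A d).
Proof.
rewrite encode_vadd; move: (encode A x) (encode A d) => u w.
by apply/ffunP => i; rewrite !ffunE; case: (e i); case: (u i); case: (w i).
Qed.

Section TypicalityTest.
Variables (n k : nat) (lam T : R) (mu : bvec k -> R).
Hypotheses (lam0 : 0 < lam) (mu0 : forall d, 0 < mu d).

(* An exponential majorant of the indicator that [y + A x] has weight at
   least [T] or that some [x' <> x] has [wt (y + A x') <= T]; the exponent
   [mu] may depend on the difference [x + x']. *)
Definition typicality_test (A : bmat n k) (x : bvec k) (y : bvec n) : R :=
  upper_test lam T (vadd y (encode A x)) +
  Rsum (fun x' => if x' == x then 0
                  else lower_test (mu (vadd x x')) T (vadd y (encode A x'))).

Lemma typicality_test_ge0 A x y : 0 <= typicality_test A x y.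
Proof.
apply: Rplus_le_le_0_compat; first exact/Rlt_le/exp_pos.
by apply: Rsum_ge0 => x'; case: eqP => _; [lra | exact/Rlt_le/exp_pos].
Qed.

Lemma typicality_test_pair A y x1 x2 : x1 <> x2 ->
  1 <= typicality_test A x1 y \/ 1 <= typicality_test A x2 y.
Proof.
move=> x12; case: (Rle_lt_dec 1 (typicality_test A x1 y)) => [|B1]; [by left | right].
apply: Rnot_lt_le => B2.
pose others x x' :=
  if x' == x then 0 else lower_test (mu (vadd x x')) T (vadd y (encode A x')).
have others_ge0 x x' : 0 <= others x x'.
  by rewrite /others; case: eqP => _; [lra | exact/Rlt_le/exp_pos].
have testE x : typicality_test A x y
    = upper_test lam T (vadd y (encode A x)) + Rsum (others x) by [].
have /upper_test_lt1 : upper_test lam T (vadd y (encode A x1)) < 1.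
  by move: B1; rewrite testE; have := Rsum_ge0 (others_ge0 x1); lra.
have /lower_test_lt1 : lower_test (mu (vadd x2 x1)) T (vadd y (encode A x1)) < 1.
  have -> : lower_test (mu (vadd x2 x1)) T (vadd y (encode A x1)) = others x2 x1.
    by rewrite /others ifN_eq //; apply/eqP.
  have := Rsum_ge_term x1 (others_ge0 x2).
  have := exp_pos (lam * (INR (wt (vadd y (encode A x2))) - T)).
  by move: B2; rewrite testE /upper_test; lra.
by move=> /(_ (mu0 _)) + /(_ lam0); lra.
Qed.

Variables (eps : R) (A : bmat n k).

(* Substituting [y = e + A x] and [x' = d + x] makes the expectation
   independent of the transmitted message. *)
Lemma Rsum_joint_typicality_test :
  Rsum (fun x => Rsum (fun y => joint eps A x y * typicality_test A x y)) =
  Rsum (fun e => noise_prob eps e * (upper_test lam T e +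
    Rsum (fun d => if d == [ffun=> false] then 0
                   else lower_test (mu d) T (vadd e (encode A d))))).
Proof.
set S := (X in _ = X).
have Sx x : Rsum (fun y => joint eps A x y * typicality_test A x y) = / 2 ^ k * S.
  rewrite -(Rsum_vadd (encode A x)) -Rsum_scal; apply: Rsum_ext => e.
  rewrite /joint /typicality_test vaddK Rmult_assoc; do 2 congr (_ * _); congr (_ + _).
  rewrite -(Rsum_vadd x); apply: Rsum_ext => d.
  by rewrite vadd_eq vadd_cancel vadd_encode_shift.
rewrite (Rsum_ext Sx) Rsum_bvec_const; field; apply: pow_nonzero; lra.
Qed.

End TypicalityTest.

(** * Averaging over the noise and the code *)

Definition bern_mgf (p t : R) : R := 1 - p + p * exp t.

(* Probability that a coordinate of [e + A d] is [1], for [wt d = w]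
   (piling-up lemma). *)
Definition mix_prob (eps rho : R) (w : nat) : R :=
  (1 - (1 - 2 * eps) * (1 - 2 * rho) ^ w) / 2.

Lemma Rsum_bern_exp_wt n p t :
  Rsum (fun v : bvec n => Rprod (fun i => bern p (v i)) * exp (t * INR (wt v)))
  = bern_mgf p t ^ n.
Proof.
under Rsum_ext => v do rewrite exp_wt -Rprod_mult.
rewrite (Rsum_bool_ffun_Rprod _ (fun b => bern p b * (if b then exp t else 1))).
by rewrite /bern_mgf /=; congr (_ ^ _); ring.
Qed.

Lemma Rsum_noise_upper_test n eps lam T :
  Rsum (fun e : bvec n => noise_prob eps e * upper_test lam T e)
  = exp (- lam * T) * bern_mgf eps lam ^ n.
Proof.
rewrite -Rsum_bern_exp_wt -Rsum_scal; apply: Rsum_ext => e.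
rewrite /upper_test Rmult_minus_distr_l /Rminus exp_plus -Ropp_mult_distr_l.
by rewrite [RHS]Rmult_comm [RHS]Rmult_assoc.
Qed.

Definition bsign (b : bool) : R := if b then -1 else 1.

Lemma bsign_addb b c : bsign (addb b c) = bsign b * bsign c.
Proof. by case: b; case: c => /=; ring. Qed.

Lemma bool_affine (f : bool -> R) b :
  f b = (f false + f true) / 2 + (f false - f true) / 2 * bsign b.
Proof. by case: b => /=; field. Qed.

Definition dot k (a d : bvec k) : bool := \big[addb/false]_(j : 'I_k) (a j && d j).

Lemma Rsum_bern_bsign_dot k rho (d : bvec k) :
  Rsum (fun a : bvec k => Rprod (fun j => bern rho (a j)) * bsign (dot a d))
  = (1 - 2 * rho) ^ wt d.
Proof.
have sign_dot a : bsign (dot a d) = Rprod (fun j => bsign (a j && d j)).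
  exact: (big_morph bsign bsign_addb).
under Rsum_ext => a do rewrite sign_dot -Rprod_mult.
rewrite (Rsum_ffun_Rprod (fun j b => bern rho b * bsign (b && d j))) -Rprod_if_wt.
by apply: eq_bigr => j _; rewrite /Rsum big_bool; case: (d j) => /=; ring.
Qed.

Lemma Rsum_bern_dot k eps rho (d : bvec k) (f : bool -> R) :
  Rsum (fun b => bern eps b *
    Rsum (fun a : bvec k => Rprod (fun j => bern rho (a j)) * f (addb b (dot a d))))
  = (1 - mix_prob eps rho (wt d)) * f false + mix_prob eps rho (wt d) * f true.
Proof.
have inner b : Rsum (fun a : bvec k => Rprod (fun j => bern rho (a j)) * f (addb b (dot a d)))
    = (f false + f true) / 2 + (f false - f true) / 2 * bsign b * (1 - 2 * rho) ^ wt d.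
  pose P (a : bvec k) := Rprod (fun j => bern rho (a j)).
  have E a : P a * f (addb b (dot a d)) = (f false + f true) / 2 * P a
      + (f false - f true) / 2 * bsign b * (P a * bsign (dot a d)).
    by rewrite bool_affine bsign_addb; ring.
  rewrite (Rsum_ext E) Rsum_plus !Rsum_scal Rsum_bern_bsign_dot.
  by rewrite /P Rsum_bern_prod Rmult_1_r.
under Rsum_ext => b do rewrite inner.
by rewrite /Rsum big_bool /mix_prob /=; field.
Qed.

Definition row n k (A : bmat n k) (i : 'I_n) : bvec k := [ffun j => A (i, j)].

Lemma Rsum_rows n k (G : 'I_n -> bvec k -> R) :
  Rsum (fun A : bmat n k => Rprod (fun i => G i (row A i)))
  = Rprod (fun i => Rsum (G i)).
Proof.
rewrite -Rsum_ffun_Rprod /Rsum (reindex (fun F : {ffun 'I_n -> bvec k} =>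
    [ffun ij : 'I_n * 'I_k => F ij.1 ij.2] : bmat n k)) /=.
  apply: eq_bigr => F _; apply: eq_bigr => i _; congr (G i _).
  by apply/ffunP => j; rewrite !ffunE.
exists (fun A => [ffun i => row A i]) => [F _ | A _]; apply/ffunP.
  by move=> i; apply/ffunP => j; rewrite !ffunE.
by case=> i j; rewrite !ffunE.
Qed.

Lemma mat_prob_rows rho n k (A : bmat n k) :
  mat_prob rho A = Rprod (fun i => Rprod (fun j => bern rho (row A i j))).
Proof. by rewrite /mat_prob /Rprod pair_bigA; apply: eq_bigr => -[i j] _; rewrite ffunE. Qed.

Lemma encode_row n k (A : bmat n k) d i : encode A d i = dot (row A i) d.
Proof. by rewrite ffunE; apply: eq_bigr => j _; rewrite ffunE. Qed.

(* For fixed [d], the coordinates of [e + A d] are i.i.d. Bernoulli with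
   parameter [mix_prob eps rho (wt d)]. *)
Lemma Rsum_noise_code_lower_test n k eps rho mu T (d : bvec k) :
  Rsum (fun e : bvec n => noise_prob eps e *
    Rsum (fun A : bmat n k => mat_prob rho A * lower_test mu T (vadd e (encode A d))))
  = exp (mu * T) * bern_mgf (mix_prob eps rho (wt d)) (- mu) ^ n.
Proof.
pose g b : R := if b then exp (- mu) else 1.
pose h b := Rsum (fun a : bvec k => Rprod (fun j => bern rho (a j)) * g (addb b (dot a d))).
have lowerE e A : lower_test mu T (vadd e (encode A d))
    = exp (mu * T) * Rprod (fun i => g (addb (e i) (dot (row A i) d))).
  rewrite /lower_test Rmult_minus_distr_l /Rminus exp_plus Ropp_mult_distr_l exp_wt.
  congr (_ * _).
  by apply: eq_bigr => i _; rewrite ffunE encode_row.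
have inner e : Rsum (fun A : bmat n k => mat_prob rho A * lower_test mu T (vadd e (encode A d)))
    = exp (mu * T) * Rprod (fun i => h (e i)).
  under Rsum_ext => A do rewrite lowerE mat_prob_rows Rmult_comm Rmult_assoc -Rprod_mult.
  rewrite Rsum_scal (Rsum_rows (fun i a => g (addb (e i) (dot a d)) *
    Rprod (fun j => bern rho (a j)))); congr (_ * _).
  by apply: eq_bigr => i _; apply: Rsum_ext => a; rewrite Rmult_comm.
under Rsum_ext => e do rewrite inner Rmult_comm Rmult_assoc -Rprod_mult.
rewrite Rsum_scal (Rsum_bool_ffun_Rprod _ (fun b => h b * bern eps b)).
congr (_ * (_ ^ _)); transitivity (Rsum (fun b => bern eps b * h b)).
  by rewrite /Rsum big_bool /=; ring.
by rewrite Rsum_bern_dot /g /bern_mgf; ring.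
Qed.

Lemma Rsum_mat_prob rho n k : Rsum (fun A : bmat n k => mat_prob rho A) = 1.
Proof.
rewrite /mat_prob (Rsum_ffun_Rprod (fun _ => bern rho)) /Rprod big1 // => ij _.
by rewrite /Rsum big_bool; apply: bern_sum.
Qed.

Lemma mat_prob_ge0 rho n k (A : bmat n k) : 0 < rho < 1 -> 0 <= mat_prob rho A.
Proof. by move=> rho01; apply/Rlt_le/Rprod_gt0 => ij; apply: bern_gt0. Qed.

Lemma avg_pc_le1 eps rho n k : 0 < eps < 1 -> 0 < rho < 1 -> avg_pc eps rho n k <= 1.
Proof.
move=> eps01 rho01; rewrite -(Rsum_mat_prob rho n k); apply: Rsum_le => A.
by have := p_c_le1 eps01 A; have := mat_prob_ge0 A rho01; nra.
Qed.

Section AverageError.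
Variables (eps rho : R) (n k : nat).
Hypotheses (eps01 : 0 < eps < 1) (rho01 : 0 < rho < 1).

Lemma avg_pc_error_le (lam T : R) (mu : bvec k -> R) :
  0 < lam -> (forall d, 0 < mu d) ->
  1 - avg_pc eps rho n k <= 2 * (exp (- lam * T) * bern_mgf eps lam ^ n +
    Rsum (fun d => if d == [ffun=> false] then 0
      else exp (mu d * T) * bern_mgf (mix_prob eps rho (wt d)) (- mu d) ^ n)).
Proof.
move=> lam0 mu0.
pose lower (A : bmat n k) (d : bvec k) (e : bvec n) := lower_test (mu d) T (vadd e (encode A d)).
pose F (d : bvec k) (A : bmat n k) (e : bvec n) :=
  if d == [ffun=> false] then 0 else mat_prob rho A * lower A d e.
have meanE A : mat_prob rho A *
    Rsum (fun x => Rsum (fun y => joint eps A x y * typicality_test lam T mu A x y))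
  = mat_prob rho A * Rsum (fun e : bvec n => noise_prob eps e * upper_test lam T e)
    + Rsum (fun d => Rsum (fun e => noise_prob eps e * F d A e)).
  rewrite Rsum_joint_typicality_test [X in _ = _ + X]Rsum_exchange.
  rewrite -!Rsum_scal -Rsum_plus; apply: Rsum_ext => e.
  rewrite !Rmult_plus_distr_l -!Rsum_scal; congr (_ + _).
  by apply: Rsum_ext => d; rewrite /F /lower; case: eqP => _; ring.
apply: (Rle_trans _ (2 * Rsum (fun A => mat_prob rho A *
    Rsum (fun x => Rsum (fun y => joint eps A x y * typicality_test lam T mu A x y))))).
  rewrite -{1}(Rsum_mat_prob rho n k) /avg_pc -Rsum_minus -Rsum_scal; apply: Rsum_le => A.
  have := p_c_error_le eps01 A (typicality_test_ge0 lam T mu A)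
    (typicality_test_pair T lam0 mu0 A).
  by have := mat_prob_ge0 A rho01; nra.
rewrite (Rsum_ext meanE) Rsum_plus Rsum_exchange.
rewrite (Rsum_ext (fun A => Rmult_comm _ _)) Rsum_scal Rsum_mat_prob Rmult_1_r.
rewrite Rsum_noise_upper_test; apply: Req_le; apply: Rmult_eq_compat_l; apply: Rplus_eq_compat_l.
apply: Rsum_ext => d; rewrite Rsum_exchange /F; case: eqP => _.
  by rewrite /Rsum !big1 // => *; rewrite ?big1 // => *; ring.
rewrite -Rsum_noise_code_lower_test; apply: Rsum_ext => e.
by rewrite -Rsum_scal; apply: Rsum_ext => A; rewrite /lower; ring.
Qed.

End AverageError.

(** * An explicit bound on the average error *)

Lemma exp_le_mono x y : x <= y -> exp x <= exp y.
Proof. by case/Rle_lt_or_eq_dec => [/exp_increasing | ->]; lra. Qed.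

Lemma pow_le1_antimono x a b : 0 <= x <= 1 -> (a <= b)%N -> x ^ b <= x ^ a.
Proof.
move=> x01 ab; rewrite -(subnKC ab) -plusE pow_add.
have : x ^ (b - a) <= 1 by rewrite -(pow1 (b - a)); apply: pow_incr; lra.
by have := pow_le x a (proj1 x01); nra.
Qed.

Definition mix_lb (eps rho : R) (w : nat) : R :=
  (1 - (1 - 2 * eps) * Rabs (1 - 2 * rho) ^ w) / 2.

Lemma bern_mgf_antimono p q t : t <= 0 -> p <= q -> bern_mgf q t <= bern_mgf p t.
Proof. by move=> t0 pq; rewrite /bern_mgf; have := exp_le_mono t0; rewrite exp_0; nra. Qed.

Lemma bern_mgf_gt0 p t : 0 <= p <= 1 -> 0 < bern_mgf p t.
Proof. by move=> p01; rewrite /bern_mgf; have := exp_pos t; nra. Qed.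

Section MixingBounds.
Variables (eps rho : R).
Hypotheses (eps01 : 0 < eps < 1 / 2) (rho01 : 0 < rho < 1).

Lemma Rabs_1_sub_2rho : 0 <= Rabs (1 - 2 * rho) <= 1.
Proof. by split; [apply: Rabs_pos | apply: Rabs_le; lra]. Qed.

Lemma mix_lb_le_mix_prob W w : (W <= w)%N -> mix_lb eps rho W <= mix_prob eps rho w.
Proof.
move=> Ww; rewrite /mix_lb /mix_prob.
have := Rle_trans _ _ _ (pow_Rabs (1 - 2 * rho) w) (pow_le1_antimono Rabs_1_sub_2rho Ww).
nra.
Qed.

Lemma mix_lb_ge0 W : 0 <= mix_lb eps rho W.
Proof.
rewrite /mix_lb; have [c0 c1] := Rabs_1_sub_2rho.
have : Rabs (1 - 2 * rho) ^ W <= 1 by rewrite -[X in _ <= X](pow1 W); apply: pow_incr; lra.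
by have := pow_le _ W c0; nra.
Qed.

Lemma mix_prob_le1 w : mix_prob eps rho w <= 1.
Proof.
rewrite /mix_prob; have [c0 c1] := Rabs_1_sub_2rho.
have : Rabs ((1 - 2 * rho) ^ w) <= 1.
  by rewrite -RPow_abs -[X in _ <= X](pow1 w); apply: pow_incr; lra.
have := Rle_abs (- (1 - 2 * rho) ^ w); rewrite Rabs_Ropp; nra.
Qed.

Lemma mix_lb_le1 W : mix_lb eps rho W <= 1.
Proof. exact: Rle_trans (mix_lb_le_mix_prob (leqnn W)) (mix_prob_le1 W). Qed.

Lemma eps_lt_mix_lb1 : eps < mix_lb eps rho 1.
Proof.
rewrite /mix_lb pow_1; have : Rabs (1 - 2 * rho) < 1 by apply: Rabs_def1; lra.
nra.
Qed.

Lemma mix_lb_le_half W : mix_lb eps rho W <= 1 / 2.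
Proof.
rewrite /mix_lb; have [c0 _] := Rabs_1_sub_2rho.
by have := pow_le _ W c0; nra.
Qed.

End MixingBounds.

Lemma pow_mul_inv_ge1 (Z : R) (w W : nat) : 1 <= Z -> (w <= W)%N -> 1 <= Z ^ W * (/ Z) ^ w.
Proof.
move=> Z1 wW; rewrite -(subnKC wW) -plusE pow_add pow_inv.
have : 0 < Z ^ w by apply: pow_lt; lra.
have : 1 <= Z ^ (W - w) by apply: pow_R1_Rle.
by move=> ? ?; rewrite Rmult_comm -Rmult_assoc Rinv_l; lra.
Qed.

Lemma Rsum_pow_wt k a : Rsum (fun d : bvec k => a ^ wt d) = (1 + a) ^ k.
Proof.
under Rsum_ext => d do rewrite -Rprod_if_wt.
by rewrite (Rsum_bool_ffun_Rprod _ (fun b => if b then a else 1)) Rplus_comm.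
Qed.

Section FiniteBound.
Variables (eps rho : R) (n k : nat).
Hypotheses (eps01 : 0 < eps < 1 / 2) (rho01 : 0 < rho < 1).

Lemma lower_test_mean_le mu T p w : 0 < mu -> p <= mix_prob eps rho w -> 0 <= p ->
  exp (mu * T) * bern_mgf (mix_prob eps rho w) (- mu) ^ n
  <= exp (mu * T) * bern_mgf p (- mu) ^ n.
Proof.
move=> mu0 pw p0; apply: Rmult_le_compat_l; first exact/Rlt_le/exp_pos.
apply: pow_incr; split; last by apply: bern_mgf_antimono; lra.
by apply/Rlt_le/bern_mgf_gt0; split; [lra | apply: mix_prob_le1].
Qed.

Variables (W : nat) (lam muh mul T Z : R).
Hypotheses (lam0 : 0 < lam) (muh0 : 0 < muh) (mul0 : 0 < mul) (Z1 : 1 <= Z).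

Let high := exp (muh * T) * bern_mgf (mix_lb eps rho W) (- muh) ^ n.
Let low := exp (mul * T) * bern_mgf (mix_lb eps rho 1) (- mul) ^ n.

Lemma bern_mgf_mix_lb_ge0 w mu : 0 <= exp (mu * T) * bern_mgf (mix_lb eps rho w) (- mu) ^ n.
Proof.
apply: Rmult_le_pos; first exact/Rlt_le/exp_pos.
by apply/pow_le/Rlt_le/bern_mgf_gt0; split; [apply: mix_lb_ge0 | apply: mix_lb_le1].
Qed.

(* Differences of weight at least [W] are handled by [muh]; the
   polynomially many of smaller weight are weighted by [Z ^ (W - wt d)]. *)
Definition weight_exponent (d : bvec k) : R := if (W <= wt d)%N then muh else mul.

Let high0 : 0 <= high := bern_mgf_mix_lb_ge0 W muh.
Let low0 : 0 <= low := bern_mgf_mix_lb_ge0 1 mul.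

Lemma weight_exponent_term_le d : d <> [ffun=> false] ->
  exp (weight_exponent d * T) * bern_mgf (mix_prob eps rho (wt d)) (- weight_exponent d) ^ n
  <= high + Z ^ W * (/ Z) ^ wt d * low.
Proof.
move=> d0.
have Zw0 : 0 <= (/ Z) ^ wt d by apply/pow_le/Rlt_le/Rinv_0_lt_compat; lra.
rewrite /weight_exponent; case: leqP => Wd.
  have := lower_test_mean_le T muh0 (mix_lb_le_mix_prob eps01 rho01 Wd) (mix_lb_ge0 eps01 rho01 W).
  rewrite -/high; have := Rmult_le_pos _ _ (Rmult_le_pos _ _ (pow_le Z W ltac:(lra)) Zw0) low0.
  lra.
have wt1 : (1 <= wt d)%N by rewrite lt0n; apply/eqP => /wt_eq0.
have := lower_test_mean_le T mul0 (mix_lb_le_mix_prob eps01 rho01 wt1) (mix_lb_ge0 eps01 rho01 1).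
by rewrite -/low; have := pow_mul_inv_ge1 Z1 (ltnW Wd); nra.
Qed.

Lemma avg_pc_error_finite :
  1 - avg_pc eps rho n k <= 2 * (exp (- lam * T) * bern_mgf eps lam ^ n
    + 2 ^ k * high + Z ^ W * (1 + / Z) ^ k * low).
Proof.
have eps1 : 0 < eps < 1 by lra.
have mu0 d : 0 < weight_exponent d by rewrite /weight_exponent; case: leqP.
apply: Rle_trans (avg_pc_error_le n eps1 rho01 T lam0 mu0) _.
rewrite Rplus_assoc; apply/Rmult_le_compat_l/Rplus_le_compat_l; first lra.
have -> : 2 ^ k * high + Z ^ W * (1 + / Z) ^ k * low
    = Rsum (fun d : bvec k => high + Z ^ W * (/ Z) ^ wt d * low).
  rewrite Rsum_plus Rsum_bvec_const -Rsum_pow_wt -Rsum_scal; congr (_ + _).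
  by rewrite Rmult_comm -Rsum_scal; apply: Rsum_ext => d; ring.
apply: Rsum_le => d; case: eqP => [_ | /weight_exponent_term_le //].
have Zw : 0 <= (/ Z) ^ wt d by apply/pow_le/Rlt_le/Rinv_0_lt_compat; lra.
have := Rmult_le_pos _ _ (Rmult_le_pos _ _ (pow_le Z W ltac:(lra)) Zw) low0.
by have := high0; lra.
Qed.

End FiniteBound.

Lemma ln2_gt0 : 0 < ln 2.
Proof. by rewrite -ln_1; apply: ln_increasing; lra. Qed.

Lemma exp_mul_INR x n : exp (x * INR n) = exp x ^ n.
Proof. by rewrite Rmult_comm exp_INR_mul. Qed.

Lemma kfloor_le Rt n : 0 <= Rt -> INR (kfloor Rt n) <= Rt * INR n.
Proof.
move=> Rt0; rewrite /kfloor; have [+ _] := base_Int_part (Rt * INR n).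
have := Rmult_le_pos _ _ Rt0 (pos_INR n).
by case: (Int_part _) => [|p|p] //= *; rewrite INR_IZR_INZ positive_nat_Z.
Qed.

Lemma pow_kfloor_le a c Rt n : 0 <= a <= exp c -> 0 <= c -> 0 <= Rt ->
  a ^ kfloor Rt n <= exp (c * Rt) ^ n.
Proof.
move=> a0 c0 Rt0; apply: Rle_trans (pow_incr _ _ _ a0) _.
rewrite -exp_INR_mul -exp_mul_INR; apply: exp_le_mono.
by have := kfloor_le n Rt0; nra.
Qed.

Section ExponentialBound.
Variables (eps rho Rt : R) (W : nat) (lam muh mul tau Z : R).
Hypotheses (eps01 : 0 < eps < 1 / 2) (rho01 : 0 < rho < 1) (Rt0 : 0 <= Rt).
Hypotheses (lam0 : 0 < lam) (muh0 : 0 < muh) (mul0 : 0 < mul) (Z1 : 1 <= Z).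

Lemma avg_pc_error_exponential_bound n :
  1 - avg_pc eps rho n (kfloor Rt n) <=
  2 * ((exp (- lam * tau) * bern_mgf eps lam) ^ n
    + (exp (ln 2 * Rt) * (exp (muh * tau) * bern_mgf (mix_lb eps rho W) (- muh))) ^ n
    + Z ^ W * (exp (/ Z * Rt) * (exp (mul * tau) * bern_mgf (mix_lb eps rho 1) (- mul))) ^ n).
Proof.
have ln2 := ln2_gt0.
have Z0 : 0 < / Z by apply: Rinv_0_lt_compat; lra.
have := avg_pc_error_finite n (kfloor Rt n) eps01 rho01 W (tau * INR n) lam0 muh0 mul0 Z1.
move/Rle_trans; apply.
rewrite !Rpow_mult_distr -!exp_mul_INR -!Rmult_assoc (Rmult_comm (- lam)).
have mgf0 w mu : 0 <= bern_mgf (mix_lb eps rho w) (- mu) ^ n.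
  by apply/pow_le/Rlt_le/bern_mgf_gt0; split; [apply: mix_lb_ge0 | apply: mix_lb_le1].
apply/Rmult_le_compat_l/Rplus_le_compat; [lra | apply: Rplus_le_compat_l |].
  apply/Rmult_le_compat_r/Rmult_le_compat_r; [exact: mgf0 | exact/Rlt_le/exp_pos |].
  by rewrite exp_mul_INR; apply: pow_kfloor_le; rewrite ?exp_ln; lra.
apply/Rmult_le_compat_r/Rmult_le_compat_r; [exact: mgf0 | exact/Rlt_le/exp_pos |].
apply: Rmult_le_compat_l; first by apply: pow_le; lra.
by rewrite exp_mul_INR; apply: pow_kfloor_le; have := exp_ineq1_le (/ Z); lra.
Qed.

End ExponentialBound.

(** * Choice of the exponents *)

Lemma ln_lt_sub1 x : 0 < x -> x <> 1 -> ln x < x - 1.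
Proof.
move=> x0 x1; have : ln x <> 0 by move=> lnx0; apply: x1; rewrite -(exp_ln x x0) lnx0 exp_0.
by move/exp_ineq1; rewrite exp_ln //; lra.
Qed.

Lemma ln_le_sub1 x : 0 < x -> ln x <= x - 1.
Proof. by move=> x0; have := exp_ineq1_le (ln x); rewrite exp_ln //; lra. Qed.

Lemma ln_div a b : 0 < a -> 0 < b -> ln (a / b) = ln a - ln b.
Proof. by move=> a0 b0; rewrite ln_mult ?ln_Rinv //; apply: Rinv_0_lt_compat. Qed.

Lemma gibbs2_strict p t : 0 < p < 1 -> 0 < t < 1 -> p <> t ->
  t * ln p + (1 - t) * ln (1 - p) < t * ln t + (1 - t) * ln (1 - t).
Proof.
move=> p01 t01 pt.
have pt1 : p / t <> 1 by move=> e; apply: pt; rewrite -(Rmult_1_l t) -e; field; lra.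
have := ln_lt_sub1 (Rdiv_lt_0_compat p t ltac:(lra) ltac:(lra)) pt1.
have := ln_le_sub1 (Rdiv_lt_0_compat (1 - p) (1 - t) ltac:(lra) ltac:(lra)).
rewrite !ln_div; try lra.
have -> : (1 - p) / (1 - t) - 1 = (t - p) / (1 - t) by field; lra.
have -> : p / t - 1 = (p - t) / t by field; lra.
move=> H1 H2; have := Rmult_le_compat_l (1 - t) _ _ ltac:(lra) H1.
have := Rmult_lt_compat_l t _ _ ltac:(lra) H2.
have -> : t * ((p - t) / t) = p - t by field; lra.
have -> : (1 - t) * ((t - p) / (1 - t)) = t - p by field; lra.
lra.
Qed.

Lemma gibbs2 p t : 0 < p < 1 -> 0 < t < 1 ->
  t * ln p + (1 - t) * ln (1 - p) <= t * ln t + (1 - t) * ln (1 - t).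
Proof. by move=> p01 t01; case: (Req_dec p t) => [-> | /(gibbs2_strict p01 t01)]; lra. Qed.

(* Chernoff's bound, at the optimal exponent
   [c = ln (t (1 - p) / (p (1 - t)))]. *)
Lemma bern_mgf_chernoff p t : 0 < p < 1 -> 0 < t < 1 -> p <> t ->
  exp (- t * ln (t * (1 - p) / (p * (1 - t))))
    * bern_mgf p (ln (t * (1 - p) / (p * (1 - t)))) < 1.
Proof.
move=> p01 t01 pt.
have M0 : 0 < t * (1 - p) / (p * (1 - t)) by apply: Rdiv_lt_0_compat; nra.
have -> : bern_mgf p (ln (t * (1 - p) / (p * (1 - t)))) = exp (ln (1 - p) - ln (1 - t)).
  by rewrite /bern_mgf exp_ln // /Rminus exp_plus exp_Ropp !exp_ln; try lra; field; lra.
rewrite -exp_plus ln_div ?ln_mult; try nra.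
rewrite -[X in _ < X]exp_0; apply: exp_increasing; have := gibbs2_strict p01 t01 pt; nra.
Qed.

Lemma upper_tail_rate p t : 0 < p -> p < t -> t < 1 ->
  exists lam, 0 < lam /\ exp (- lam * t) * bern_mgf p lam < 1.
Proof.
move=> p0 pt t1; have p01 : 0 < p < 1 by lra.
have t01 : 0 < t < 1 by lra.
have := bern_mgf_chernoff p01 t01 (Rlt_not_eq _ _ pt).
set c := ln _ => rate; exists c; split; last by rewrite (_ : - c * t = - t * c) //; ring.
rewrite /c -ln_1; apply: ln_increasing; first lra.
apply/(Rmult_lt_reg_r (p * (1 - t))); first nra.
by rewrite Rmult_1_l /Rdiv Rmult_assoc Rinv_l; nra.
Qed.

Lemma lower_tail_rate p t : 0 < t -> t < p -> p < 1 ->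
  exists mu, 0 < mu /\ exp (mu * t) * bern_mgf p (- mu) < 1.
Proof.
move=> t0 tp p1; have p01 : 0 < p < 1 by lra.
have t01 : 0 < t < 1 by lra.
have := bern_mgf_chernoff p01 t01 (Rgt_not_eq _ _ tp).
set c := ln _ => rate; exists (- c); split; last first.
  by rewrite (_ : - c * t = - t * c) ?Ropp_involutive //; ring.
have M1 : t * (1 - p) / (p * (1 - t)) < 1.
  apply/(Rmult_lt_reg_r (p * (1 - t))); first nra.
  by rewrite Rmult_1_l /Rdiv Rmult_assoc Rinv_l; nra.
have : c < 0 by rewrite /c -ln_1; apply: ln_increasing => //; apply: Rdiv_lt_0_compat; nra.
lra.
Qed.

Lemma h2_le_tangent eps t : 0 < eps < 1 -> 0 < t < 1 ->
  h2 t <= h2 eps + (t - eps) * (ln (1 - eps) - ln eps) / ln 2.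
Proof.
move=> eps01 t01; have ln2 := ln2_gt0.
suff : 0 <= (h2 eps + (t - eps) * (ln (1 - eps) - ln eps) / ln 2 - h2 t) * ln 2.
  set D := (X in 0 <= X * _) => H.
  have : 0 <= D by apply/(Rmult_le_reg_r (ln 2)) => //; lra.
  by rewrite /D; lra.
have -> : (h2 eps + (t - eps) * (ln (1 - eps) - ln eps) / ln 2 - h2 t) * ln 2
    = t * ln t + (1 - t) * ln (1 - t) - (t * ln eps + (1 - t) * ln (1 - eps)).
  by rewrite /h2 /log2; field; lra.
by have := gibbs2 eps01 t01; lra.
Qed.

Lemma capacity_margin eps Rt q : 0 < eps -> eps < q -> q <= 1 / 2 ->
  Rt < capacity eps -> exists tau, eps < tau /\ tau < q /\ Rt < capacity tau.
Proof.
move=> eps0 epsq q2 Rt_eps; have ln2 := ln2_gt0.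
pose L := ln (1 - eps) - ln eps.
have L0 : 0 < L by have := ln_increasing eps (1 - eps) eps0 ltac:(lra); rewrite /L; lra.
pose delta := Rmin ((capacity eps - Rt) * ln 2 / (2 * L)) ((q - eps) / 2).
have delta0 : 0 < delta.
  by apply: Rmin_glb_lt; [apply: Rdiv_lt_0_compat; nra | lra].
have delta1 := Rmin_l ((capacity eps - Rt) * ln 2 / (2 * L)) ((q - eps) / 2).
have delta2 := Rmin_r ((capacity eps - Rt) * ln 2 / (2 * L)) ((q - eps) / 2).
rewrite -/delta in delta1 delta2.
exists (eps + delta); do 2 (split; first lra).
have eps01 : 0 < eps < 1 by lra.
have tau01 : 0 < eps + delta < 1 by lra.
have := h2_le_tangent eps01 tau01.
have : (eps + delta - eps) * L / ln 2 <= (capacity eps - Rt) / 2.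
  apply/(Rmult_le_reg_r (ln 2)) => //; rewrite /Rdiv Rmult_assoc Rinv_l; last lra.
  have : delta * (2 * L) <= (capacity eps - Rt) * ln 2.
    apply/(Rmult_le_reg_r (/ (2 * L))); first by apply: Rinv_0_lt_compat; lra.
    by rewrite Rmult_assoc Rinv_r; lra.
  nra.
by move: Rt_eps; rewrite /capacity -/L; lra.
Qed.

(* At the fair coin, the exponent [ln ((1 - tau) / tau)] turns the bound
   for [2 ^ Rt] codewords into [2 ^ (Rt - capacity tau)]. *)
Lemma bern_mgf_half_rate Rt tau : 0 < tau < 1 ->
  exp (ln 2 * Rt) * (exp (ln ((1 - tau) / tau) * tau)
    * bern_mgf (1 / 2) (- ln ((1 - tau) / tau)))
  = exp (ln 2 * (Rt - capacity tau)).
Proof.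
move=> tau01; have ln2 := ln2_gt0.
have -> : bern_mgf (1 / 2) (- ln ((1 - tau) / tau)) = exp (- (ln 2 + ln (1 - tau))).
  rewrite /bern_mgf !exp_Ropp exp_plus !exp_ln; try lra.
    by field; lra.
  by apply: Rdiv_lt_0_compat; lra.
rewrite -!exp_plus ln_div; try lra; congr exp.
by rewrite /capacity /h2 /log2; field; lra.
Qed.

Lemma bern_mgf_mix_lb_le eps rho W mu : 0 < eps < 1 / 2 -> 0 < rho < 1 -> 0 < mu ->
  bern_mgf (mix_lb eps rho W) (- mu) <= bern_mgf (1 / 2) (- mu) + Rabs (1 - 2 * rho) ^ W.
Proof.
move=> eps01 rho01 mu0.
have c0 : 0 <= Rabs (1 - 2 * rho) ^ W by apply/pow_le/Rabs_pos.
have e1 : 0 < exp (- mu) < 1.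
  by split; [apply: exp_pos | rewrite -exp_0; apply: exp_increasing; lra].
have -> : bern_mgf (mix_lb eps rho W) (- mu) = bern_mgf (1 / 2) (- mu)
    + (1 - 2 * eps) * (1 - exp (- mu)) / 2 * Rabs (1 - 2 * rho) ^ W.
  by rewrite /bern_mgf /mix_lb; field.
have : 0 <= (1 - 2 * eps) * (1 - exp (- mu)) / 2 <= 1 by split; nra.
nra.
Qed.

Lemma high_weight_rate eps rho Rt tau : 0 < eps < 1 / 2 -> 0 < rho < 1 ->
  0 < tau < 1 / 2 -> Rt < capacity tau ->
  exists mu W, 0 < mu /\
    exp (ln 2 * Rt) * (exp (mu * tau) * bern_mgf (mix_lb eps rho W) (- mu)) < 1.
Proof.
move=> eps01 rho01 tau01 Rt_tau; have ln2 := ln2_gt0.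
pose mu := ln ((1 - tau) / tau).
have mu0 : 0 < mu.
  rewrite /mu -ln_1; apply: ln_increasing; first lra.
  by apply/(Rmult_lt_reg_r tau); [lra | rewrite /Rdiv Rmult_assoc Rinv_l; lra].
pose beta := exp (ln 2 * Rt) * exp (mu * tau).
have beta0 : 0 < beta by apply: Rmult_lt_0_compat; apply: exp_pos.
have half : beta * bern_mgf (1 / 2) (- mu) < 1.
  rewrite /beta Rmult_assoc bern_mgf_half_rate; last lra.
  by rewrite -[X in _ < X]exp_0; apply: exp_increasing; nra.
have c1 : Rabs (Rabs (1 - 2 * rho)) < 1 by rewrite Rabs_Rabsolu; apply: Rabs_def1; lra.
have gap : 0 < (1 - beta * bern_mgf (1 / 2) (- mu)) / beta by apply: Rdiv_lt_0_compat; lra.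
have [W small] := pow_lt_1_zero _ c1 _ gap.
exists mu, W; split=> //; rewrite -Rmult_assoc -/beta.
have := small W (Nat.le_refl W); rewrite Rabs_pos_eq; last exact/pow_le/Rabs_pos.
move=> cW; have := bern_mgf_mix_lb_le W eps01 rho01 mu0.
have : beta * Rabs (1 - 2 * rho) ^ W < 1 - beta * bern_mgf (1 / 2) (- mu).
  move: cW => /(Rmult_lt_compat_l beta _ _ beta0).
  by rewrite (_ : beta * (_ / beta) = 1 - beta * bern_mgf (1 / 2) (- mu)) //; field; lra.
nra.
Qed.

Lemma exp_inv_mul_lt1 g Rt : 0 < g < 1 -> 0 <= Rt ->
  exists Z, 1 <= Z /\ exp (/ Z * Rt) * g < 1.
Proof.
move=> g01 Rt0; have lng : ln g < 0 by rewrite -ln_1; apply: ln_increasing; lra.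
set Z := 1 + Rt / - ln g; have Z1 : 1 <= Z.
  have := Rmult_le_pos _ _ Rt0 (Rlt_le _ _ (Rinv_0_lt_compat (- ln g) ltac:(lra))).
  by rewrite /Z /Rdiv; lra.
exists Z; split=> //.
have -> : exp (/ Z * Rt) * g = exp (/ Z * Rt + ln g) by rewrite exp_plus exp_ln; lra.
rewrite -[X in _ < X]exp_0; apply: exp_increasing; suff: / Z * Rt < - ln g by lra.
apply/(Rmult_lt_reg_l Z); first lra.
rewrite -Rmult_assoc Rinv_r; last lra.
by rewrite /Z Rmult_1_l Rmult_plus_distr_r /Rdiv Rmult_assoc Rinv_l; lra.
Qed.

Lemma pow_lt1_eventually x y : 0 <= x < 1 -> 0 < y ->
  exists N, forall n, (N <= n)%N -> x ^ n < y.
Proof.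
move=> x01 y0; have [N xN] := pow_lt_1_zero x ltac:(rewrite Rabs_pos_eq; lra) y y0.
by exists N => n /leP /xN; rewrite Rabs_pos_eq //; apply: pow_le; lra.
Qed.

Lemma Un_cv_one_of_error_bound (u : nat -> R) a b g K :
  0 <= a < 1 -> 0 <= b < 1 -> 0 <= g < 1 -> 0 <= K ->
  (forall n, u n <= 1) -> (forall n, 1 - u n <= 2 * (a ^ n + b ^ n + K * g ^ n)) ->
  Un_cv u 1.
Proof.
move=> a01 b01 g01 K0 u1 err e e0.
pose y := e / (2 * (2 + K)).
have y0 : 0 < y by apply: Rdiv_lt_0_compat; lra.
have [Na aN] := pow_lt1_eventually a01 y0.
have [Nb bN] := pow_lt1_eventually b01 y0.
have [Ng gN] := pow_lt1_eventually g01 y0.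
exists (maxn Na (maxn Nb Ng)) => n /leP; rewrite !geq_max => /and3P[/aN an /bN bn /gN gn].
rewrite /R_dist Rabs_left1; last by have := u1 n; lra.
have : K * g ^ n <= K * y by apply: Rmult_le_compat_l; lra.
have : 2 * (y + y + K * y) = e by rewrite /y; field; lra.
by have := err n; lra.
Qed.

Lemma avg_pc_error_exponential eps Rt rho :
  0 < eps < 1 / 2 -> 0 < Rt -> Rt < capacity eps -> 0 < rho < 1 ->
  exists a b g K, [/\ 0 <= a < 1, 0 <= b < 1, 0 <= g < 1, 0 <= K &
    forall n, 1 - avg_pc eps rho n (kfloor Rt n) <= 2 * (a ^ n + b ^ n + K * g ^ n)].
Proof.
move=> eps01 Rt0 Rt_eps rho01.
have rate_gt0 p t s : 0 <= p <= 1 -> 0 < exp s * bern_mgf p t.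
  by move=> p01; apply: Rmult_lt_0_compat; [apply: exp_pos | apply: bern_mgf_gt0].
have W01 W : 0 <= mix_lb eps rho W <= 1.
  by split; [apply: mix_lb_ge0 | apply: mix_lb_le1].
have q_half := mix_lb_le_half eps01 rho01 1.
have [tau [eps_tau [tau_q Rt_tau]]] :=
  capacity_margin (proj1 eps01) (eps_lt_mix_lb1 eps01 rho01) q_half Rt_eps.
have tau_half : 0 < tau < 1 / 2 by lra.
have [lam [lam0 a1]] := upper_tail_rate (proj1 eps01) eps_tau ltac:(lra).
have [muh [W [muh0 b1]]] := high_weight_rate eps01 rho01 tau_half Rt_tau.
have [mul [mul0 g1]] := lower_tail_rate (proj1 tau_half) tau_q ltac:(lra).
have g0 := rate_gt0 _ (- mul) (mul * tau) (W01 1%N).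
have [Z [Z1 gZ1]] := exp_inv_mul_lt1 (conj g0 g1) (Rlt_le _ _ Rt0).
exists (exp (- lam * tau) * bern_mgf eps lam),
  (exp (ln 2 * Rt) * (exp (muh * tau) * bern_mgf (mix_lb eps rho W) (- muh))),
  (exp (/ Z * Rt) * (exp (mul * tau) * bern_mgf (mix_lb eps rho 1) (- mul))), (Z ^ W).
split; last exact: avg_pc_error_exponential_bound eps01 rho01 (Rlt_le _ _ Rt0) lam0 muh0 mul0 Z1.
- have eps_01 : 0 <= eps <= 1 by lra.
  by have := rate_gt0 _ lam (- lam * tau) eps_01; lra.
- by have := exp_pos (ln 2 * Rt); have := rate_gt0 _ (- muh) (muh * tau) (W01 W); nra.
- by have := exp_pos (/ Z * Rt); nra.
- by apply: pow_le; lra.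
Qed.

Theorem theorem2 (eps Rt rho : R)
  (heps0 : 0 < eps) (heps1 : eps < 1 / 2)
  (hR0 : 0 < Rt) (hRC : Rt < capacity eps)
  (hrho0 : 0 < rho) (hrho1 : rho < 1) :
  Un_cv (fun n : nat => avg_pc eps rho n (kfloor Rt n)) 1.
Proof.
have [a [b [g [K [a01 b01 g01 K0 err]]]]] :=
  avg_pc_error_exponential (conj heps0 heps1) hR0 hRC (conj hrho0 hrho1).
apply: (Un_cv_one_of_error_bound a01 b01 g01 K0 _ err) => n.
by apply: avg_pc_le1; lra.
Qed.
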